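(* Let $Z$ be a Hausdorff, completely regular, non-discrete topological space. Then there exists a Hausdorff scattered space $X$, which is neither locally compact nor zero-dimensional, such that $\mathrm{Homeo}(Z)$ is isomorphic as an abstract group to the quotient $\mathrm{Homeo}(X)/\mathrm{Fix}(X^{(1)})$. Moreover, if $Z$ is the topological realization of a graph $\mathcal{G}$ without vertices of degree $2$, then the composition of the quotient map $\mathrm{Homeo}(X)\to\mathrm{Homeo}(X)/\mathrm{Fix}(X^{(1)})$, this isomorphism, and the map $\mathrm{Homeo}(Z)\to\mathrm{Aut}(\mathcal{G})$ given by restricting a homeomorphism to its action on the vertices, is a continuous surjection $\mathrm{Homeo}(X)\to\mathrm{Aut}(\mathcal{G})$.
   Context: A space is scattered if every nonempty subset has a point isolated in that subset. $X^{(1)}$ denotes the derived set of $X$ (its set of non-isolated points) and $\mathrm{Fix}(X^{(1)})$ the subgroup of homeomorphisms of $X$ fixing $X^{(1)}$ pointwise. For scattered $X$, $\mathrm{Homeo}(X)$ carries the topology of pointwise convergence on $X$. Completely regular: points can be separated from closed sets by continuous real-valued functions. Locally compact means Hausdorff with every point having a quasi-compact neighbourhood; zero-dimensional means having a basis of clopen sets. A graph is a simple non-oriented graph $(V,E)$ with $E$ nonempty; its topological realization is obtained by identifying each edge with $[0,1]$ and gluing endpoints along the vertices. Homeomorphisms of the realization preserve the vertices of degree $\neq 2$, hence when there are no vertices of degree 2 restriction to vertices gives a map $\mathrm{Homeo}(Z)\to\mathrm{Aut}(\mathcal{G})$; $\mathrm{Aut}(\mathcal{G})\le\mathrm{Sym}(V)$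 carries the topology of pointwise convergence on the discrete set $V$. *)

From HB Require Import structures.
From mathcomp Require Import all_boot all_order all_algebra.
From mathcomp Require Import all_classical all_reals all_analysis.
From mathcomp Require Import Rstruct Rstruct_topology.
Set Implicit Arguments. Unset Strict Implicit. Unset Printing Implicit Defensive.
Import Order.TTheory GRing.Theory Num.Theory.
Local Open Scope classical_set_scope.

Definition completely_regular (T : topologicalType) : Prop :=
  forall (a : T) (B : set T), closed B -> ~ B a ->
    exists f : T -> Rdefinitions.R, continuous f /\ f a = 0%R /\
      (forall b, B b -> f b = 1%R).

Definition isolated_pt (T : topologicalType) (x : T) : Prop := open [set x].

Definition derived_set (T : topologicalType) : set T :=
  [set x | ~ isolated_pt x].

Definition discrete_sp (T : topologicalType) : Prop := forall x : T, isolated_pt x.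

Definition scattered (T : topologicalType) : Prop :=
  forall A : set T, A !=set0 ->
    exists x, A x /\ exists U : set T, open U /\ U `&` A = [set x].

Definition locally_compact_sp (T : topologicalType) : Prop :=
  hausdorff_space T /\ forall x : T, exists K : set T, compact K /\ nbhs x K.

Definition zero_dim (T : topologicalType) : Prop :=
  forall (x : T) (U : set T), nbhs x U ->
    exists V : set T, open V /\ closed V /\ V x /\ V `<=` U.

Definition homeo (T : topologicalType) (f : T -> T) : Prop :=
  exists g : T -> T, cancel f g /\ cancel g f /\ continuous f /\ continuous g.

Definition fixes_derived (T : topologicalType) (f : T -> T) : Prop :=
  forall x : T, @derived_set T x -> f x = x.

(** [Phi] is a group homomorphism from Homeo(X) onto Homeo(Z) whose kernel is
    exactly Fix(X^(1)); i.e. it induces an isomorphism of abstract groups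
    Homeo(X)/Fix(X^(1)) ~= Homeo(Z), and Phi is the composite
    Homeo(X) -> Homeo(X)/Fix(X^(1)) -> Homeo(Z). *)
Definition quotient_iso_map (X Z : topologicalType) (Phi : (X -> X) -> (Z -> Z)) : Prop :=
  (forall h, homeo h -> homeo (Phi h)) /\
  (forall h k, homeo h -> homeo k -> Phi (h \o k) = Phi h \o Phi k) /\
  (forall g, homeo g -> exists h, homeo h /\ Phi h = g) /\
  (forall h, homeo h -> (Phi h = id <-> fixes_derived h)).

Definition simple_graph (V : Type) (adj : V -> V -> Prop) : Prop :=
  (forall x y, adj x y -> adj y x) /\ (forall x, ~ adj x x) /\
  (exists x y, adj x y).

Definition degree_two (V : Type) (adj : V -> V -> Prop) (x : V) : Prop :=
  exists y1 y2, y1 <> y2 /\ forall y, adj x y <-> (y = y1 \/ y = y2).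

Definition unit_int : set Rdefinitions.R := `[0%R, 1%R].
Definition open_unit_int : set Rdefinitions.R := `]0%R, 1%R[.

(** Z is (homeomorphic to) the topological realization of the graph (V, adj):
    [vtx v] is the point of vertex v and [edge x y : [0,1] -> Z] parametrizes
    the edge {x,y} from x to y; Z is the quotient of V + (E x [0,1]) gluing
    endpoints to vertices, with the quotient (weak) topology. *)
Definition realization (V : Type) (adj : V -> V -> Prop) (Z : topologicalType)
    (vtx : V -> Z) (edge : V -> V -> Rdefinitions.R -> Z) : Prop :=
  simple_graph adj /\
  injective vtx /\
  (forall x y, adj x y -> edge x y 0%R = vtx x /\ edge x y 1%R = vtx y) /\
  (forall x y t, adj x y -> unit_int t -> edge y x (1 - t)%R = edge x y t) /\
  (forall x y t v, adj x y -> open_unit_int t -> edge x y t <> vtx v) /\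
  (forall x y t x' y' t', adj x y -> adj x' y' -> open_unit_int t ->
     open_unit_int t' -> edge x y t = edge x' y' t' ->
     (x = x' /\ y = y' /\ t = t') \/ (x = y' /\ y = x' /\ t = (1 - t')%R)) /\
  (forall z : Z, (exists v, z = vtx v) \/
     (exists x y t, adj x y /\ open_unit_int t /\ z = edge x y t)) /\
  (forall A : set Z, open A <->
     forall x y, adj x y -> exists O : set Rdefinitions.R, open O /\
       (edge x y @^-1` A) `&` unit_int = O `&` unit_int).

Definition graph_aut (V : Type) (adj : V -> V -> Prop) (a : V -> V) : Prop :=
  bijective a /\ forall x y, adj x y <-> adj (a x) (a y).

(** Continuity of F : Homeo(X) -> Aut(G), where Homeo(X) carries the topology
    of pointwise convergence on X and Aut(G) that of pointwise convergence on
    the discrete set V (basic neighbourhoods written out). *)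
Definition ptws_continuous (X : topologicalType) (V : Type)
    (F : (X -> X) -> (V -> V)) : Prop :=
  forall h, homeo h -> forall Fv : seq V,
    exists (S : seq X) (U : X -> set X),
      (forall x, List.In x S -> open (U x) /\ U x (h x)) /\
      (forall g, homeo g -> (forall x, List.In x S -> U x (g x)) ->
         forall v, List.In v Fv -> F g v = F h v).

From HB Require Import structures.
From mathcomp Require Import all_boot all_order all_algebra.
From mathcomp Require Import all_classical all_reals all_analysis.
From mathcomp Require Import Rstruct Rstruct_topology.
From mathcomp Require Import lra.
Set Implicit Arguments. Unset Strict Implicit. Unset Printing Implicit Defensive.
Import Order.TTheory GRing.Theory Num.Theory.
Local Open Scope classical_set_scope.

(* The space [fan Z] adds to [Z] isolated points [(u, m)], [m : nat], with
   [(u, m)] converging to [z] as [u] tends to [z] and [m] to infinity.  Its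
   derived set is [Z], so every homeomorphism of [fan Z] restricts to a
   homeomorphism of [Z] (continuous because [Z] is regular), every homeomorphism
   [g] of [Z] lifts as [(u, m) |-> (g u, m)], and the kernel of the restriction
   is Fix(X^(1)).  A non-isolated [z] has no compact neighbourhood, since a
   level [{(u, n)}] near [z] has no cluster point, and no clopen neighbourhood
   avoiding the other points of [Z], since these are limits of isolated points
   close to [z].
   For a graph realization without vertices of degree 2, homeomorphisms send
   vertices to vertices, since a vertex sent into an open edge would have a
   neighbourhood that is an open arc, forcing degree 2; by connectedness they
   send open edges into open edges, hence induce automorphisms.  Conversely an
   automorphism extends edgewise to a homeomorphism. *)

Lemma homeo_inverse (T : topologicalType) (f : T -> T) :
  homeo f -> exists g, [/\ homeo g, cancel f g & cancel g f].
Proof. by move=> [g [fK [gK [fc gc]]]]; exists g; split => //; exists f. Qed.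

Lemma homeo_inj (T : topologicalType) (f : T -> T) : homeo f -> injective f.
Proof. by move=> [g [fK _]]; exact: can_inj fK. Qed.

Lemma homeo_isolated (T : topologicalType) (f : T -> T) x :
  homeo f -> isolated_pt (f x) <-> isolated_pt x.
Proof.
move=> [g [fK [gK [fc gc]]]]; rewrite /isolated_pt.
have set1E (a b : T -> T) y : cancel a b -> cancel b a -> [set a y] = b @^-1` [set y].
  by move=> aK bK; apply/seteqP; split=> [_ -> /=|u /= <-]; rewrite ?aK ?bK.
split=> [ofx|ox]; first by rewrite -[x]fK (set1E _ _ _ gK fK); exact: open_comp.
by rewrite (set1E _ _ _ fK gK); exact: open_comp.
Qed.

Lemma nonisolated_neq (T : topologicalType) (z : T) (U : set T) :
  ~ open [set z] -> open U -> U z -> exists2 u, U u & u <> z.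
Proof.
move=> nz oU Uz; apply: contra_notP nz => /forall2NP Uzz.
suff -> : [set z] = U by [].
apply/seteqP; split=> [_ -> //|u Uu]; by case: (Uzz u) => // /contrapT.
Qed.

Lemma proper_dnbhs (T : topologicalType) (z : T) : ~ open [set z] -> ProperFilter z^'.
Proof.
move=> nz; apply: Build_ProperFilter_ex => P.
rewrite /dnbhs /within nbhsE => -[B [oB Bz] BP].
by have [u Bu uz] := nonisolated_neq nz oB Bz; exists u; apply: BP => //; exact/eqP.
Qed.

Lemma dnbhs_setC1 (T : topologicalType) (z w : T) :
  hausdorff_space T -> z^' (~` [set w]).
Proof.
move=> hT; have [<-|wz] := eqVneq w z.
  by rewrite /dnbhs /within; apply: nearW => u /eqP.
apply: nbhs_dnbhs; apply: open_nbhs_nbhs; split; last by move=> /esym/eqP; rewrite (negbTE wz).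
exact/closed_openC/accessible_closed_set1/hausdorff_accessible.
Qed.

Lemma regular_of_completely_regular (T : topologicalType) :
  completely_regular T -> regular_space T.
Proof.
move=> crT x; apply/regular_openP => A cA Ax.
have [f [fc [fx f1]]] := crT x A cA Ax.
have h0 : (0 < 2^-1 :> Rdefinitions.R)%R by rewrite invr_gt0.
have h1 : (2^-1 < 1 :> Rdefinitions.R)%R by rewrite invf_lt1 ?ltr1n.
exists (f @^-1` [set r | r < 2^-1]%R), (f @^-1` [set r | 2^-1 < r]%R); split.
- by apply: open_comp; [move=> ? _; exact: fc|exact: open_lt].
- by apply: open_comp; [move=> ? _; exact: fc|exact: open_gt].
- by rewrite /= fx.
- by move=> a /f1 /= ->.
- by apply/seteqP; split=> // a [/= a1 a2]; move: (lt_trans a2 a1); rewrite ltxx.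
Qed.

Lemma open_disjoint_separated (T : topologicalType) (A B : set T) :
  open A -> open B -> A `&` B = set0 -> separated A B.
Proof.
move=> oA oB AB0.
have meet (C D : set T) x : closure C x -> open D -> D x -> C `&` D !=set0.
  by move=> /(_ D) + oD Dx; apply; exact: open_nbhs_nbhs.
split; apply/seteqP; split=> // x [].
  by move=> clAx Bx; have [y] := meet _ _ _ clAx oB Bx; rewrite AB0.
by move=> Ax clBx; have [y] := meet _ _ _ clBx oA Ax; rewrite setIC AB0.
Qed.

Lemma connected_in_one_piece (T : topologicalType) (I : Type) (O : I -> set T) (C : set T) i z :
  connected C -> (forall j, open (O j)) -> (forall j k x, O j x -> O k x -> O j = O k) ->
  C `<=` \bigcup_j O j -> C z -> O i z -> C `<=` O i.
Proof.
move=> cC oO Opiece CO Cz Oiz.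
pose B := \bigcup_(j in [set j | O j <> O i]) O j.
have sep : separated (O i) B.
  apply: open_disjoint_separated; [exact: oO|exact: bigcup_open|].
  by apply/seteqP; split=> // x [Oix [j /= Oji Ojx]]; case: Oji; exact: Opiece Ojx Oix.
have COB : C `<=` O i `|` B.
  move=> x /CO [j _ Ojx]; have [Oji|Oji] := pselect (O j = O i).
    by left; rewrite -Oji.
  by right; exists j.
have [//|CB] := connected_subset sep COB cC.
by have [j /= + Ojz] := CB z Cz; case; exact: Opiece Ojz Oiz.
Qed.

(* [inl z] is the limit of [inr (u, m)] as [u] tends to [z] and [m] to
   infinity, and the points [inr p] are isolated. *)
Definition fan (Z : topologicalType) := (Z + Z * nat)%type.
HB.instance Definition _ (Z : topologicalType) :=
  Choice.copy (fan Z) (Z + Z * nat)%type.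

Definition fan_open (Z : topologicalType) (A : set (fan Z)) :=
  forall z, A (inl z) -> exists U (n : nat),
    [/\ open U, U z & forall u m, U u -> (n <= m)%N -> A (inr (u, m))].

Lemma fan_openT (Z : topologicalType) : fan_open [set: fan Z].
Proof. by move=> z _; exists setT, 0%N; split => //; exact: openT. Qed.

Lemma fan_openI (Z : topologicalType) : setI_closed (@fan_open Z).
Proof.
move=> A B oA oB z [/oA [U [n [oU Uz UA]]] /oB [U' [n' [oU' U'z U'B]]]].
exists (U `&` U'), (maxn n n'); split => //; first exact: openI.
move=> u m [Uu U'u]; rewrite geq_max => /andP [nm n'm].
by split; [exact: UA|exact: U'B].
Qed.

Lemma fan_open_bigcup (Z : topologicalType) (I : Type) (A : I -> set (fan Z)) :
  (forall i, fan_open (A i)) -> fan_open (\bigcup_i A i).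
Proof.
move=> oA z [i _ /oA [U [n [oU Uz UA]]]]; exists U, n; split => // u m Uu nm.
by exists i => //; exact: UA.
Qed.

HB.instance Definition _ (Z : topologicalType) :=
  isOpenTopological.Build (fan Z) (@fan_openT Z) (@fan_openI Z) (@fan_open_bigcup Z).

Section fan_theory.
Variable Z : topologicalType.
Implicit Types (A : set (fan Z)) (h g : fan Z -> fan Z).

Definition fan_base (x : fan Z) : Z :=
  match x with inl z => z | inr (u, _) => u end.

(* Junk value [z] when [h (inl z)] is isolated, which never happens for a
   homeomorphism [h]. *)
Definition fan_map (h : fan Z -> fan Z) (z : Z) : Z :=
  if h (inl z) is inl z' then z' else z.

Definition fan_lift (g : Z -> Z) (x : fan Z) : fan Z :=
  match x with inl z => inl (g z) | inr (u, m) => inr (g u, m) end.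

Lemma fan_openE A : open A = fan_open A.
Proof. by []. Qed.

Lemma open_fan_inr p : open [set inr p : fan Z].
Proof. by rewrite fan_openE. Qed.

Lemma open_fan_setC1_inr p : open (~` [set inr p : fan Z]).
Proof.
case: p => w k; rewrite fan_openE => z _.
exists setT, k.+1; split => //; first exact: openT.
by move=> u m _ km [_ mk]; rewrite mk ltnn in km.
Qed.

Lemma open_fan_of_inr A : (forall p, A (inr p)) -> open A.
Proof.
move=> Ainr; rewrite fan_openE => z _.
by exists setT, 0%N; split => //; exact: openT.
Qed.

Lemma not_open_fan_inl z : ~ open [set inl z : fan Z].
Proof. by rewrite fan_openE => /(_ z erefl) [U [n [_ Uz /(_ z n Uz (leqnn n))]]]. Qed.

Lemma fan_derivedP (x : fan Z) : derived_set x <-> exists z, x = inl z.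
Proof.
split; last by move=> [z ->]; exact: not_open_fan_inl.
by case: x => [z|p] xd; [exists z|case: xd; exact: open_fan_inr].
Qed.

Lemma closure_fan_inl A w :
  (exists n, forall m, (n <= m)%N -> A (inr (w, m))) -> closure A (inl w).
Proof.
move=> [n An] B; rewrite nbhsE => -[C [oC Cw] CB].
have [U [k [_ Uw UC]]] := oC w Cw.
exists (inr (w, maxn n k)); split; first by apply: An; exact: leq_maxl.
by apply: CB; apply: UC => //; exact: leq_maxr.
Qed.

Lemma fan_base_continuous : continuous fan_base.
Proof.
apply/continuousP => S oS; rewrite fan_openE => z Sz.
by exists S, 0%N; split.
Qed.

Lemma hausdorff_fan : hausdorff_space Z -> hausdorff_space (fan Z).
Proof.
rewrite !open_hausdorff => hZ x y xy.
have inr_sep p : [/\ open [set inr p : fan Z], open (~` [set inr p : fan Z])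
                  & [set inr p : fan Z] `&` ~` [set inr p] == set0].
  by split; [exact: open_fan_inr|exact: open_fan_setC1_inr|rewrite setICr].
case: x y xy => [a|p] [b|q] xy.
- have ab : a != b by apply: contraNneq xy => ->.
  have [[A B] /= [aA bB] [oA oB /eqP AB]] := hZ a b ab.
  exists (fan_base @^-1` A, fan_base @^-1` B); first by rewrite !inE in aA bB *.
  have bc := (continuousP _).1 fan_base_continuous.
  by split; [exact: bc|exact: bc|rewrite -preimage_setI AB preimage_set0].
- have [oq oCq /eqP qCq] := inr_sep q.
  by exists (~` [set inr q], [set inr q]); [rewrite !inE|split; rewrite // setIC qCq].
- have [op oCp pCp] := inr_sep p.
  by exists ([set inr p], ~` [set inr p]); [rewrite !inE|split].
- have [op oCp pCp] := inr_sep p.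
  exists ([set inr p], ~` [set inr p]); last by split.
  by rewrite !inE; split => // qp; rewrite qp eqxx in xy.
Qed.

Lemma scattered_fan : scattered (fan Z).
Proof.
move=> A [x0 Ax0].
have [[p Ap]|Ainl] := pselect (exists p, A (inr p)).
  exists (inr p); split => //; exists [set inr p]; split; first exact: open_fan_inr.
  by apply/seteqP; split => [q [->]//|q ->].
case: x0 Ax0 => [z|p] Ax0; last by case: Ainl; exists p.
exists (inl z); split => //; exists ([set inl z] `|` range inr); split.
  by apply: open_fan_of_inr => p; right; exists p.
apply/seteqP; split => [q [[->//|[p _ <-]] Ap]|q ->]; last by split => //; left.
by case: Ainl; exists p.
Qed.

Lemma not_zero_dim_fan : ~ discrete_sp Z -> ~ zero_dim (fan Z).
Proof.
move=> /existsNP [z nz] zd.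
have oU : open ([set inl z] `|` range inr : set (fan Z)).
  by apply: open_fan_of_inr => p; right; exists p.
have [V [oV [cV [Vz VU]]]] := zd _ _ (open_nbhs_nbhs (conj oU (or_introl erefl))).
have [U [n [oU' Uz UV]]] := oV z Vz.
have [w Uw wz] := nonisolated_neq nz oU' Uz.
have : V (inl w).
  by rewrite (closure_id V).1 //; apply: closure_fan_inl; exists n => m; exact: UV.
by move=> /VU [[/wz]|[p _]].
Qed.

Lemma not_cluster_fan_level (z : Z) (n : nat) (x : fan Z) :
  hausdorff_space Z -> ~ cluster ((fun u => inr (u, n) : fan Z) @ z^') x.
Proof.
move=> hZ; case: x => [w|[w k]] clx.
- pose B : set (fan Z) := [set inl w] `|` inr @` [set q | (n < q.2)%N].
  have oB : open B.
    rewrite fan_openE => x [[->]|[q _ //]].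
    exists setT, n.+1; split => //; first exact: openT.
    by move=> u m _ nm; right; exists (u, m).
  have Fr : ((fun u => inr (u, n) : fan Z) @ z^') (range (fun u => inr (u, n))).
    by rewrite fmapE; apply: filterE => u; exists u.
  have NB : nbhs (inl w : fan Z) B by apply: open_nbhs_nbhs; split => //; left.
  have [_ [[u _ <-] [//|[[u' m] /= nm [_ mn]]]]] := clx _ _ Fr NB.
  by rewrite mn ltnn in nm.
- have Nw : nbhs (inr (w, k) : fan Z) [set inr (w, k)].
    by apply: open_nbhs_nbhs; split => //; exact: open_fan_inr.
  have Fw : ((fun u => inr (u, n) : fan Z) @ z^') ((fun u => inr (u, n)) @` ~` [set w]).
    by apply: filterS (dnbhs_setC1 z w hZ) => u wu; exists u.
  by have [_ [[u uw <-] [/uw]]] := clx _ _ Fw Nw.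
Qed.

Lemma not_locally_compact_fan :
  hausdorff_space Z -> ~ discrete_sp Z -> ~ locally_compact_sp (fan Z).
Proof.
move=> hZ /existsNP [z nz] [_ /(_ (inl z)) [K [cK]]].
rewrite nbhsE => -[B [oB Bz] BK].
have [U [n [oU Uz UB]]] := oB z Bz.
pose level u : fan Z := inr (u, n).
have FK : (level @ z^') K.
  apply: nbhs_dnbhs; apply: filterS (open_nbhs_nbhs (conj oU Uz)) => u Uu.
  by apply: BK; apply: UB.
have [x [_ clx]] := cK _ (fmap_proper_filter level (proper_dnbhs nz)) FK.
exact: not_cluster_fan_level hZ clx.
Qed.

Lemma homeo_fan_inl h z : homeo h -> h (inl z) = inl (fan_map h z).
Proof.
move=> hh; rewrite /fan_map; case E: (h (inl z)) => [//|p].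
have : isolated_pt (h (inl z)) by rewrite E; exact: open_fan_inr.
by move/(homeo_isolated _ hh)/not_open_fan_inl.
Qed.

Lemma fan_map_comp h g : homeo h -> homeo g -> fan_map (h \o g) = fan_map h \o fan_map g.
Proof. by move=> hh hg; apply: funext => z; rewrite /fan_map /= !homeo_fan_inl. Qed.

Lemma fan_map_cancel h g : homeo h -> homeo g -> cancel h g -> cancel (fan_map h) (fan_map g).
Proof.
move=> hh hg hK z.
by have [] : inl (fan_map g (fan_map h z)) = inl z :> fan Z by rewrite -!homeo_fan_inl.
Qed.

Lemma fan_map_continuous h : regular_space Z -> homeo h -> continuous (fan_map h).
Proof.
move=> rZ hh; have [_ [_ [_ [hc _]]]] := hh.
have /continuousP bhc : continuous (fan_base \o h).
  by move=> x; apply: continuous_comp; [exact: hc|exact: fan_base_continuous].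
apply/continuousP => W oW; rewrite openE => z Wz.
(* Points [inr (u, m)] with [u] near [z] and [m] large are sent to [W1]; if
   [fan_map h u] lay outside [W], they would eventually be sent to [W2]. *)
have [W1 [W2 [oW1 oW2 W1w WW2 W12]]] :=
  (regular_openP _).1 (rZ _) _ (open_closedC oW) (fun nW => nW Wz).
have [|U [n [oU Uz UW1]]] := bhc _ oW1 z; first by rewrite /= homeo_fan_inl.
rewrite /interior nbhsE; exists U => //= u Uu; apply: contrapT => nWu.
have [|U' [n' [_ U'u U'W2]]] := bhc _ oW2 u; first by rewrite /= homeo_fan_inl //; exact: WW2.
have W12x : (W1 `&` W2) (fan_base (h (inr (u, maxn n n')))).
  by split; [apply: UW1 => //; exact: leq_maxl|apply: U'W2 => //; exact: leq_maxr].
by rewrite W12 in W12x.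
Qed.

Lemma homeo_fan_map h : regular_space Z -> homeo h -> homeo (fan_map h).
Proof.
move=> rZ hh; have [g [hg hK gK]] := homeo_inverse hh.
exists (fan_map g); split; first exact: fan_map_cancel.
by split; [exact: fan_map_cancel|split; exact: fan_map_continuous].
Qed.

Lemma fan_lift_continuous (g : Z -> Z) : continuous g -> continuous (fan_lift g).
Proof.
move=> /continuousP gc; apply/continuousP => A; rewrite !fan_openE => oA z /oA.
move=> [U [n [oU Ugz UA]]]; exists (g @^-1` U), n; split => //; first exact: gc.
by move=> u m Uu nm; exact: UA.
Qed.

Lemma homeo_fan_lift (g : Z -> Z) : homeo g -> homeo (fan_lift g).
Proof.
move=> [g' [gK [g'K [gc g'c]]]]; exists (fan_lift g').
split; first by case=> [z|[u m]] /=; rewrite gK.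
split; first by case=> [z|[u m]] /=; rewrite g'K.
by split; exact: fan_lift_continuous.
Qed.

Lemma quotient_iso_fan_map : regular_space Z -> quotient_iso_map fan_map.
Proof.
move=> rZ; split; first by move=> h; exact: homeo_fan_map.
split; first by move=> h g; exact: fan_map_comp.
split; first by move=> g hg; exists (fan_lift g); split; [exact: homeo_fan_lift|].
move=> h hh; split=> [hid x /fan_derivedP [z ->]|hfix].
  by rewrite homeo_fan_inl // hid.
apply: funext => z; have /= := hfix (inl z) ((fan_derivedP _).2 (ex_intro _ z erefl)).
by rewrite homeo_fan_inl // => -[].
Qed.

Lemma ptws_continuous_fan_map (V : Type) (vtx : V -> Z) (F : (fan Z -> fan Z) -> V -> V) :
  injective vtx -> (forall h, homeo h -> forall v, fan_map h (vtx v) = vtx (F h v)) ->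
  ptws_continuous F.
Proof.
move=> vtx_inj FE h hh Fv.
exists (List.map (fun v => inl (vtx v)) Fv), (fun x => [set h x] `|` range inr).
split=> [x _|g hg gS v Fv_v].
  by split; [apply: open_fan_of_inr => p; right; exists p|left].
apply: vtx_inj; rewrite -!FE //.
have := gS _ (List.in_map (fun v => inl (vtx v)) _ _ Fv_v).
by rewrite !homeo_fan_inl // => -[[]|[p _]].
Qed.

End fan_theory.

Local Notation R := Rdefinitions.R.
Local Open Scope ring_scope.

Lemma open_oo (a b : R) : open [set s : R | a < s < b].
Proof.
have -> : [set s : R | a < s < b] = [set s | a < s] `&` [set s | s < b].
  by apply/seteqP; split=> s /=; [move/andP|move=> [-> ->]].
by apply: openI; [exact: open_gt|exact: open_lt].
Qed.

Lemma nbhs_realP (t : R) (P : R -> Prop) :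
  nbhs t P <-> exists2 e : R, 0 < e & forall s, t - e < s < t + e -> P s.
Proof.
rewrite nbhs_ballP; split=> -[e e0 eP]; exists e => // s.
  by move=> ts; apply: eP; rewrite /ball /= ltr_distlC.
by rewrite /ball /= ltr_distlC; exact: eP.
Qed.

Lemma in_unit_int (t : R) : unit_int t <-> 0 <= t <= 1.
Proof. by rewrite /unit_int /= in_itv. Qed.

Lemma in_open_unit_int (t : R) : open_unit_int t <-> 0 < t < 1.
Proof. by rewrite /open_unit_int /= in_itv. Qed.

Lemma open_open_unit_int : open open_unit_int.
Proof.
have -> : open_unit_int = [set s | 0 < s < 1] by apply/seteqP; split=> s /in_open_unit_int.
exact: open_oo.
Qed.

Lemma open_unit_int_sub (t : R) : open_unit_int t -> unit_int t.
Proof. by move/in_open_unit_int => /andP [t0 t1]; apply/in_unit_int; rewrite !ltW. Qed.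

Lemma open_unit_int_1B (t : R) : open_unit_int t -> open_unit_int (1 - t).
Proof. by move/in_open_unit_int => /andP [? ?]; apply/in_open_unit_int; apply/andP; split; lra. Qed.

Lemma unit_int_1B (t : R) : unit_int t -> unit_int (1 - t).
Proof. by move/in_unit_int => /andP [? ?]; apply/in_unit_int; apply/andP; split; lra. Qed.

Lemma unit_int_cases (t : R) : unit_int t -> [\/ t = 0, t = 1 | open_unit_int t].
Proof.
move/in_unit_int => /andP [t0 t1].
have [->|tn0] := eqVneq t 0; first exact: Or31.
have [->|tn1] := eqVneq t 1; first exact: Or32.
by apply: Or33; apply/in_open_unit_int; rewrite !lt_neqAle eq_sym tn0 tn1 t0 t1.
Qed.

Lemma interval_path_in_one_piece (T : topologicalType) (I : Type) (O : I -> set T)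
    (g : R -> T) (l r : R) :
  l < r -> (forall s, l < s < r -> {for s, continuous g}) ->
  (forall j, open (O j)) -> (forall j k x, O j x -> O k x -> O j = O k) ->
  (forall s, l < s < r -> exists j, O j (g s)) ->
  exists i, forall s, l < s < r -> O i (g s).
Proof.
move=> lr gc oO Opiece gO.
have mid : l < (l + r) / 2 < r by apply/andP; split; lra.
have [i Oi] := gO _ mid; exists i => s ls.
have cg : connected (g @` `]l, r[).
  apply: connected_continuous_connected.
    by apply/connected_intervalP; exact: interval_is_interval.
  by apply: continuous_in_subspaceT => x; rewrite inE /= in_itv /=; exact: gc.
apply: (connected_in_one_piece cg oO Opiece _ _ Oi); last 2 first.
- by exists ((l + r) / 2) => //=; rewrite in_itv.
- by exists s => //=; rewrite in_itv.
by move=> _ [x /= + <-]; rewrite in_itv => /gO [j Oj]; exists j.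
Qed.

Section realization.
Variables (V : Type) (adj : V -> V -> Prop) (Z : topologicalType).
Variables (vtx : V -> Z) (edge : V -> V -> R -> Z).
Hypothesis rz : realization adj vtx edge.

Lemma adj_sym x y : adj x y -> adj y x.
Proof. by case: rz => [[sym _] _]; exact: sym. Qed.

Lemma adj_irrefl x : ~ adj x x.
Proof. by case: rz => [[_ [irr _]] _]; exact: irr. Qed.

Lemma vtx_inj : injective vtx.
Proof. by case: rz => [_ []]. Qed.

Lemma edge0 x y : adj x y -> edge x y 0 = vtx x.
Proof. by case: rz => [_ [_ [ends _]]] /ends []. Qed.

Lemma edge1 x y : adj x y -> edge x y 1 = vtx y.
Proof. by case: rz => [_ [_ [ends _]]] /ends []. Qed.

Lemma edge_flip x y t : adj x y -> unit_int t -> edge x y t = edge y x (1 - t).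
Proof. by case: rz => [_ [_ [_ [flip _]]]] xy t01; rewrite flip. Qed.

Lemma edge_neq_vtx x y t v : adj x y -> open_unit_int t -> edge x y t <> vtx v.
Proof. by case: rz => [_ [_ [_ [_ [nv _]]]]]; exact: nv. Qed.

Lemma edge_interior_inj x y t x' y' t' :
  adj x y -> adj x' y' -> open_unit_int t -> open_unit_int t' ->
  edge x y t = edge x' y' t' ->
  [/\ x = x', y = y' & t = t'] \/ [/\ x = y', y = x' & t = 1 - t'].
Proof.
case: rz => [_ [_ [_ [_ [_ [inj _]]]]]] xy xy' t01 t01' /(inj _ _ _ _ _ _ xy xy' t01 t01').
by case=> [[-> [-> ->]]|[-> [-> ->]]]; [left|right].
Qed.

Lemma realization_cover z :
  (exists v, z = vtx v) \/ (exists x y t, [/\ adj x y, open_unit_int t & z = edge x y t]).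
Proof.
case: rz => [_ [_ [_ [_ [_ [_ [cover _]]]]]]].
by case: (cover z) => [|[x [y [t [? [? ?]]]]]]; [left|right; exists x, y, t].
Qed.

Lemma realization_openP (A : set Z) :
  open A <-> forall x y, adj x y ->
    exists2 O : set R, open O & edge x y @^-1` A `&` unit_int = O `&` unit_int.
Proof.
case: rz => [_ [_ [_ [_ [_ [_ [_ openE]]]]]]]; rewrite openE.
by split=> Aopen x y /Aopen [U]; [move=> [oU AU]|move=> oU AU]; exists U.
Qed.

Lemma edge_interior x y t a b s :
  adj x y -> adj a b -> unit_int t -> open_unit_int s -> edge x y t = edge a b s ->
  open_unit_int t.
Proof.
move=> xy ab /unit_int_cases [->|->|//] s01.
  by rewrite edge0 // => /esym /(edge_neq_vtx ab s01).
by rewrite edge1 // => /esym /(edge_neq_vtx ab s01).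
Qed.

Lemma edge_interior_inj_from p y y' u u' :
  adj p y -> adj p y' -> open_unit_int u -> open_unit_int u' ->
  edge p y u = edge p y' u' -> y = y' /\ u = u'.
Proof.
move=> py py' u01 u01' /(edge_interior_inj py py' u01 u01') [[_ -> ->]//|[_ yp _]].
by rewrite yp in py; case: (adj_irrefl py).
Qed.

Lemma edge_near x y t (A : set Z) :
  open A -> adj x y -> unit_int t -> A (edge x y t) ->
  exists2 e : R, 0 < e & forall s, unit_int s -> t - e < s < t + e -> A (edge x y s).
Proof.
move=> oA xy t01 At; have [U oU AU] := (realization_openP A).1 oA x y xy.
have [Ut _] : (U `&` unit_int) t by rewrite -AU.
have [e e0 eU] := (nbhs_realP t U).1 (open_nbhs_nbhs (conj oU Ut)).
exists e => // s s01 /eU Us.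
by have [] : (edge x y @^-1` A `&` unit_int) s by rewrite AU.
Qed.

Lemma edge_continuous x y s : adj x y -> open_unit_int s -> {for s, continuous (edge x y)}.
Proof.
move=> xy /[dup] s01 /in_open_unit_int /andP [s0 s1] A.
rewrite nbhsE => -[B [oB Bs] BA]; apply/nbhs_realP.
have [e e0 eB] := edge_near oB xy (open_unit_int_sub s01) Bs.
pose m := Num.min e (Num.min s (1 - s)).
have me : m <= e by rewrite ge_min lexx.
have ms : m <= s by rewrite !ge_min lexx orbT.
have m1s : m <= 1 - s by rewrite !ge_min lexx !orbT.
exists m; first by rewrite !lt_min e0 s0 subr_gt0 s1.
move=> t /andP [? ?]; apply: BA; apply: eB; [apply/in_unit_int|]; apply/andP; split; lra.
Qed.

Lemma open_propI (P : Prop) (J : set R) : open J -> open [set t | P /\ J t].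
Proof.
have [p|np] := pselect P => oJ.
  by have -> : [set t | P /\ J t] = J by apply/seteqP; split=> [t []|t Jt].
by have -> : [set t | P /\ J t] = set0 by apply/seteqP; split=> [t []|].
Qed.

Lemma open_preimage_1B (J : set R) : open J -> open [set t | J (1 - t)].
Proof.
move=> oJ; rewrite openE => t Jt; apply/nbhs_realP.
have [e e0 eJ] := (nbhs_realP _ J).1 (open_nbhs_nbhs (conj oJ Jt)).
by exists e => // s /andP [? ?]; apply: eJ; apply/andP; split; lra.
Qed.

Lemma open_edge_image a b (J : set R) :
  adj a b -> open J -> J `<=` open_unit_int -> open (edge a b @` J).
Proof.
move=> ab oJ J01; apply/realization_openP => x y xy.
exists ([set t | (x = a /\ y = b) /\ J t] `|` [set t | (x = b /\ y = a) /\ J (1 - t)]).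
  by apply: openU; apply: open_propI => //; exact: open_preimage_1B.
apply/seteqP; split=> t [Jt t01]; split=> //.
  case: Jt => s Js E; have s01 := J01 _ Js.
  have t01' := edge_interior xy ab t01 s01 (esym E).
  case: (edge_interior_inj xy ab t01' s01 (esym E)) => -[-> -> ->]; first by left.
  by right; rewrite /= subKr.
case: Jt => -[[-> ->] Jt]; first by exists t.
by exists (1 - t) => //=; rewrite edge_flip ?subKr //; exact: unit_int_1B.
Qed.

Definition star (p : V) (e : R) : set Z :=
  [set vtx p] `|` [set z | exists y u, [/\ adj p y, 0 < u < e & z = edge p y u]].

Lemma star_edge p y t e : e <= 1 -> adj p y -> unit_int t -> t < e -> star p e (edge p y t).
Proof.
move=> e1 py /unit_int_cases [->|->|t01] te; first by left; rewrite edge0.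
  by have := lt_le_trans te e1; rewrite ltxx.
by right; exists y, t; split => //; move/in_open_unit_int: t01 => /andP [-> _].
Qed.

Lemma star_edge_inv p e x y t : 0 < e <= 1 -> adj x y -> unit_int t ->
  star p e (edge x y t) -> (x = p /\ t < e) \/ (y = p /\ 1 - e < t).
Proof.
move=> /andP [e0 e1] xy t01 [E|[y' [u [py' /andP [u0 ue] E]]]].
  case: (unit_int_cases t01) => [t0|t1|t01'].
  - by left; move: E; rewrite t0 edge0 // => /vtx_inj.
  - by right; move: E; rewrite t1 edge1 // => /vtx_inj ->; split => //; lra.
  - by case: (edge_neq_vtx xy t01' E).
have u01 : open_unit_int u by apply/in_open_unit_int; rewrite u0 (lt_le_trans ue e1).
have t01' := edge_interior xy py' t01 u01 E.
by case: (edge_interior_inj xy py' t01' u01 E) => -[-> -> ->]; [left|right]; split => //; lra.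
Qed.

Lemma open_star p e : 0 < e <= 1 -> open (star p e).
Proof.
move=> e01; have /andP [e0 e1] := e01; apply/realization_openP => x y xy.
exists ([set t | x = p /\ t < e] `|` [set t | y = p /\ 1 - e < t]).
  by apply: openU; apply: open_propI; [exact: open_lt|exact: open_gt].
apply/seteqP; split=> t [st t01]; split => //; first exact: star_edge_inv.
case: st => -[? te]; subst; first exact: star_edge.
rewrite /= edge_flip //; apply: star_edge => //; [exact: adj_sym|exact: unit_int_1B|lra].
Qed.

Lemma edge_near_vertex (A : set Z) x y : open A -> A (vtx x) -> adj x y ->
  exists2 e : R, 0 < e <= 1 & forall u, 0 < u < e -> A (edge x y u).
Proof.
move=> oA Ax xy.
have [||e e0 eA] := edge_near oA xy (t := 0); first by apply/in_unit_int; rewrite lexx ler01.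
  by rewrite edge0.
exists (Num.min e 1); first by rewrite lt_min e0 ltr01 ge_min lexx orbT.
move=> u /andP [u0]; rewrite lt_min => /andP [ue u1].
by apply: eA; [apply/in_unit_int; rewrite !ltW|apply/andP; split; lra].
Qed.

Definition edge_cell c d : set Z := edge c d @` [set u | adj c d /\ open_unit_int u].

Lemma open_edge_cell c d : open (edge_cell c d).
Proof.
have oJ : open [set u | adj c d /\ open_unit_int u].
  exact/open_propI/open_open_unit_int.
have [cd|ncd] := pselect (adj c d); first by apply: open_edge_image => // u [].
have -> : edge_cell c d = set0 by apply/seteqP; split=> // z [u [/ncd]].
exact: open0.
Qed.

Lemma edge_cell_edge c d u : adj c d -> open_unit_int u -> edge_cell c d (edge c d u).
Proof. by exists u. Qed.

Lemma edge_cell_sym c d : adj c d -> edge_cell c d = edge_cell d c.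
Proof.
have sub a b : adj a b -> edge_cell a b `<=` edge_cell b a.
  move=> ab _ [u [_ u01] <-]; exists (1 - u).
    by split; [exact: adj_sym|exact: open_unit_int_1B].
  by rewrite (edge_flip (adj_sym ab) (unit_int_1B (open_unit_int_sub u01))) subKr.
by move=> cd; apply/seteqP; split; apply: sub => //; exact: adj_sym.
Qed.

Lemma edge_cell_inv c d x y u : adj x y -> open_unit_int u ->
  edge_cell c d (edge x y u) -> (x = c /\ y = d) \/ (x = d /\ y = c).
Proof.
move=> xy u01 [u' [cd u01'] /esym E].
by case: (edge_interior_inj xy cd u01 u01' E) => -[-> -> _]; [left|right].
Qed.

Lemma eq_edge_cell c d c' d' z :
  edge_cell c d z -> edge_cell c' d' z -> edge_cell c d = edge_cell c' d'.
Proof.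
move=> [u [cd u01] <-] /(edge_cell_inv cd u01) [[? ?]|[? ?]]; subst => //.
exact: edge_cell_sym.
Qed.

(* [psi] maps an open interval around [t0] injectively and openly onto a
   neighbourhood of [vtx p = psi t0], as happens when a homeomorphism sends the
   vertex [p] into the interior of an edge.  Each half-interval runs inside a
   single edge at [p], every edge at [p] meets the image near [p], and the two
   half-intervals cannot run inside the same edge, since the initial segment
   of that edge would then lie on one side of [t0] only.  So [p] has degree 2. *)
Section interval_chart.
Variables (p : V) (psi : R -> Z) (l t0 r : R).
Hypothesis lt0 : l < t0.
Hypothesis t0r : t0 < r.
Hypothesis psi_cont : forall s, l < s < r -> {for s, continuous psi}.
Hypothesis psi_inj : forall s s', l < s < r -> l < s' < r -> psi s = psi s' -> s = s'.
Hypothesis psi_open : forall J : set R, open J -> J `<=` [set s | l < s < r] -> open (psi @` J).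
Hypothesis psi_t0 : psi t0 = vtx p.
Hypothesis psi_star : forall s, l < s < r -> star p 1 (psi s).

Let lt0r : l < t0 < r. Proof. by rewrite lt0 t0r. Qed.

Let side_lo (b : bool) := if b then t0 else l.
Let side_hi (b : bool) := if b then r else t0.
Let side b s := side_lo b < s < side_hi b.

Let side_in b s : side b s -> l < s < r.
Proof.
move: lt0 t0r; rewrite /side /side_lo /side_hi.
by case: b => /= ? ? /andP [? ?]; apply/andP; split; lra.
Qed.

Let side_neq b s : side b s -> s != t0.
Proof. by rewrite /side /side_lo /side_hi; case: b => /= /andP [? ?]; apply/eqP => st; lra. Qed.

Let side_inj b b' s : side b s -> side b' s -> b = b'.
Proof.
rewrite /side /side_lo /side_hi.
by case: b; case: b' => //= /andP [? ?] /andP [? ?]; exfalso; lra.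
Qed.

Let side_cover s : l < s < r -> s != t0 -> exists b, side b s.
Proof.
move=> /andP [? ?]; rewrite /side /side_lo /side_hi.
have [?|?|//] := ltgtP s t0 => _; [exists false|exists true]; exact/andP.
Qed.

Let side_near b d : 0 < d -> exists s, side b s /\ t0 - d < s < t0 + d.
Proof.
move=> d0; pose m := Num.min d (Num.min (t0 - l) (r - t0)).
have m0 : 0 < m by rewrite !lt_min d0 !subr_gt0 lt0 t0r.
have md : m <= d by rewrite ge_min lexx.
have ml : m <= t0 - l by rewrite !ge_min lexx orbT.
have mr : m <= r - t0 by rewrite !ge_min lexx !orbT.
exists (if b then t0 + m / 2 else t0 - m / 2); move: lt0 t0r.
by rewrite /side /side_lo /side_hi; case: b => ? ?; split; apply/andP; split; lra.
Qed.

Lemma chart_neq_vtx s : l < s < r -> s != t0 -> psi s <> vtx p.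
Proof. by move=> ls /eqP st E; apply: st; apply: psi_inj; rewrite // psi_t0. Qed.

Lemma chart_side_cell b :
  exists2 y, adj p y & forall s, side b s -> edge_cell p y (psi s).
Proof.
have [y yP] : exists y, forall s, side b s -> edge_cell p y (psi s).
  apply: (interval_path_in_one_piece (O := edge_cell p)).
    by case: b; rewrite /side_lo /side_hi.
  - by move=> s /side_in; exact: psi_cont.
  - exact: open_edge_cell.
  - by move=> ? ? ?; exact: eq_edge_cell.
  move=> s sb; have [y [u [py /andP [u0 u1] E]]] :
      exists y u, [/\ adj p y, 0 < u < 1 & psi s = edge p y u].
    by case: (psi_star (side_in sb)) => // /(chart_neq_vtx (side_in sb) (side_neq sb)).
  by exists y; rewrite E; apply: edge_cell_edge => //; apply/in_open_unit_int/andP.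
have [s [sb _]] := side_near b ltr01.
by exists y => //; have [u [] ] := yP s sb.
Qed.

Lemma chart_neighbour (Y : bool -> V) y :
  (forall b s, side b s -> edge_cell p (Y b) (psi s)) -> adj p y -> exists b, y = Y b.
Proof.
move=> YP py.
have oW : open (psi @` [set s | l < s < r]) by apply: psi_open => //; exact: open_oo.
have [e /andP [e0 e1] eW] := edge_near_vertex oW (ex_intro2 _ _ t0 lt0r psi_t0) py.
have u01 : open_unit_int (e / 2) by apply/in_open_unit_int/andP; split; lra.
have [s ls E] := eW (e / 2) ltac:(apply/andP; split; lra).
have st : s != t0.
  by apply/eqP => st; rewrite st psi_t0 in E; exact: edge_neq_vtx py u01 (esym E).
have [b sb] := side_cover ls st; have [u [pYb u01'] Eu] := YP b s sb.
by exists b; have [] := edge_interior_inj_from py pYb u01 u01' (etrans (esym E) (esym Eu)).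
Qed.

Lemma chart_near_arc y e b : 0 < e <= 1 -> adj p y ->
  (forall u, 0 < u < e -> (psi @` side b) (edge p y u)) ->
  exists2 d, 0 < d & forall s, t0 - d < s < t0 + d -> l < s < r -> s != t0 ->
    edge_cell p y (psi s) -> side b s.
Proof.
move=> /[dup] e01 /andP [e0 e1] py arc.
have star_psi_t0 : star p e (psi t0) by left.
have [d d0 dstar] := (nbhs_realP t0 _).1
  (psi_cont lt0r (open_nbhs_nbhs (conj (open_star p e01) star_psi_t0))).
exists d => // s sd ls st [u [_ u01] Eu].
case: (dstar s sd) => [E|[y' [u' [py' /andP [u'0 u'e] E]]]].
  by case: (chart_neq_vtx ls st E).
have u'01 : open_unit_int u' by apply/in_open_unit_int; rewrite u'0 (lt_le_trans u'e e1).
have [_ uu'] := edge_interior_inj_from py py' u01 u'01 (etrans Eu E).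
have [s' s'b E'] := arc u ltac:(by rewrite uu' u'0 u'e).
by have -> : s = s' by apply: psi_inj => //; [exact: side_in s'b|rewrite E' Eu].
Qed.

Lemma chart_sides_distinct (Y : bool -> V) :
  (forall b s, side b s -> edge_cell p (Y b) (psi s)) -> Y false <> Y true.
Proof.
move=> YP Yft.
have cellT b s : side b s -> edge_cell p (Y true) (psi s).
  by case: b => sb; [|rewrite -Yft]; exact: YP.
have py : adj p (Y true).
  by have [s [sb _]] := side_near true ltr01; have [u [] ] := cellT _ _ sb.
have oW : open (psi @` [set s | l < s < r]) by apply: psi_open => //; exact: open_oo.
have [e e01 eW] := edge_near_vertex oW (ex_intro2 _ _ t0 lt0r psi_t0) py.
have [e0 e1] := andP e01.
have [b arc] : exists b, forall u, 0 < u < e -> (psi @` side b) (edge p (Y true) u).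
  apply: (interval_path_in_one_piece (O := fun b => psi @` side b)) => //.
  - move=> u /andP [u0 ue]; apply: edge_continuous => //.
    by apply/in_open_unit_int; rewrite u0 (lt_le_trans ue e1).
  - move=> b'; apply: psi_open; last exact: side_in.
    by rewrite /side; exact: open_oo.
  - move=> b1 b2 _ [s1 s1b <-] [s2 s2b E].
    have s21 : s2 = s1 by apply: psi_inj; [exact: side_in s2b|exact: side_in s1b|].
    by rewrite (side_inj s1b (_ : side b2 s1)) // -s21.
  move=> u /andP [u0 ue]; have [s ls E] := eW u ltac:(by rewrite u0).
  have u01 : open_unit_int u by apply/in_open_unit_int; rewrite u0 (lt_le_trans ue e1).
  have st : s != t0.
    by apply/eqP => st; rewrite st psi_t0 in E; exact: edge_neq_vtx py u01 (esym E).
  by have [b sb] := side_cover ls st; exists b; exists s.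
have [d d0 near] := chart_near_arc e01 py arc.
have [s [snb sd]] := side_near (~~ b) d0.
have := near s sd (side_in snb) (side_neq snb) (cellT _ _ snb).
by move/(side_inj snb); case: b {arc near snb sd}.
Qed.

Lemma chart_degree_two : degree_two adj p.
Proof.
have /choice [Y YP] : forall b, exists y, adj p y /\ forall s, side b s -> edge_cell p y (psi s).
  by move=> b; have [y py yP] := chart_side_cell b; exists y.
have YS b s : side b s -> edge_cell p (Y b) (psi s) by move=> sb; exact: (YP b).2.
exists (Y false), (Y true); split; first exact: chart_sides_distinct.
move=> y; split=> [/(chart_neighbour YS) [[] ->]|[->|->]]; [by right|by left|exact: (YP _).1..].
Qed.

End interval_chart.

Lemma homeo_vertex_endpoint g v w v' c d : homeo g -> adj v w -> g (vtx v) = vtx v' ->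
  (forall u, 0 < u < 1 -> edge_cell c d (g (edge v w u))) -> v' = c \/ v' = d.
Proof.
move=> hg vw gv cell; have [_ [_ [_ [gc _]]]] := hg.
have oS : open (g @^-1` star v' 1).
  by apply: (continuousP g).1 gc _ _; apply: open_star; rewrite ltr01 lexx.
have [e /andP [e0 e1] eS] := edge_near_vertex oS (or_introl gv : (g @^-1` star v' 1) (vtx v)) vw.
have u01 : open_unit_int (e / 2) by apply/in_open_unit_int/andP; split; lra.
case: (eS (e / 2) ltac:(apply/andP; split; lra)) => [E|[z [u [v'z /andP [u0 u1] E]]]].
  by move: E; rewrite -gv => /(homeo_inj hg) /(edge_neq_vtx vw u01).
have := cell (e / 2) ltac:(apply/andP; split; lra); rewrite E.
have u01' : open_unit_int u by apply/in_open_unit_int/andP.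
by case/(edge_cell_inv v'z u01') => -[-> _]; [left|right].
Qed.

Definition aut_extension (a : V -> V) (z : Z) : Z :=
  if pselect (exists v, z = vtx v) is left e then vtx (a (projT1 (cid e)))
  else if pselect (exists xyt : V * V * R,
      [/\ adj xyt.1.1 xyt.1.2, open_unit_int xyt.2 & z = edge xyt.1.1 xyt.1.2 xyt.2])
    is left e then let: (x, y, t) := projT1 (cid e) in edge (a x) (a y) t
  else z.

Lemma aut_extension_vtx a v : aut_extension a (vtx v) = vtx (a v).
Proof.
rewrite /aut_extension; case: pselect => [e|[]]; last by exists v.
by case: cid => v' /= /vtx_inj ->.
Qed.

Lemma aut_extension_edge a x y t : (forall x y, adj x y -> adj (a x) (a y)) ->
  adj x y -> unit_int t -> aut_extension a (edge x y t) = edge (a x) (a y) t.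
Proof.
move=> ha xy /unit_int_cases [->|->|t01].
- by rewrite !edge0 ?aut_extension_vtx //; exact: ha.
- by rewrite !edge1 ?aut_extension_vtx //; exact: ha.
rewrite /aut_extension; case: pselect => [[v /(edge_neq_vtx xy t01)]//|_].
case: pselect => [e|[]]; last by exists (x, y, t).
case: cid => -[[x' y'] t'] /= [x'y' t01' E].
case: (edge_interior_inj xy x'y' t01 t01' E) => -[-> -> ->] //.
by rewrite (edge_flip (ha _ _ (adj_sym x'y')) (unit_int_1B (open_unit_int_sub t01'))) subKr.
Qed.

Lemma aut_extension_continuous a : (forall x y, adj x y -> adj (a x) (a y)) ->
  continuous (aut_extension a).
Proof.
move=> ha; apply/continuousP => A oA; apply/realization_openP => x y xy.
have [U oU AU] := (realization_openP A).1 oA _ _ (ha _ _ xy).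
exists U => //; rewrite -AU; apply/seteqP; split=> t [At t01]; split=> //=.
  by move: At; rewrite /= aut_extension_edge.
by rewrite aut_extension_edge.
Qed.

Lemma aut_extension_cancel a b :
  (forall x y, adj x y -> adj (a x) (a y)) -> (forall x y, adj x y -> adj (b x) (b y)) ->
  cancel a b -> cancel (aut_extension a) (aut_extension b).
Proof.
move=> ha hb ab z; case: (realization_cover z) => [[v ->]|[x [y [t [xy t01 ->]]]]].
  by rewrite !aut_extension_vtx ab.
have t01' := open_unit_int_sub t01.
by rewrite !aut_extension_edge ?ab //; exact: ha.
Qed.

Lemma homeo_aut_extension a : graph_aut adj a -> homeo (aut_extension a).
Proof.
move=> [[b ab ba] aadj].
have ha x y : adj x y -> adj (a x) (a y) by move/aadj.
have hb x y : adj x y -> adj (b x) (b y) by move=> xy; apply/aadj; rewrite !ba.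
exists (aut_extension b); split; first exact: aut_extension_cancel.
by split; [exact: aut_extension_cancel|split; exact: aut_extension_continuous].
Qed.

Definition vertex_map (g : Z -> Z) (v : V) : V :=
  if pselect (exists w, g (vtx v) = vtx w) is left e then projT1 (cid e) else v.

Lemma vertex_map_eq g v w : g (vtx v) = vtx w -> vertex_map g v = w.
Proof.
move=> gv; rewrite /vertex_map; case: pselect => [e|[]]; last by exists w.
by case: cid => w' /= gv'; apply: vtx_inj; rewrite -gv' gv.
Qed.

Lemma vertex_map_aut_extension a : vertex_map (aut_extension a) = a.
Proof. by apply: funext => v; apply: vertex_map_eq; exact: aut_extension_vtx. Qed.

Section no_degree_two.
Hypothesis no_degree_two : forall v, ~ degree_two adj v.

Lemma homeo_vertex g p : homeo g -> exists w, g (vtx p) = vtx w.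
Proof.
move=> hg; case: (realization_cover (g (vtx p))) => [//|[a [b [t0 [ab t01 E]]]]].
have [_ [_ [_ [gc _]]]] := hg.
have [ginv [[_ [_ [_ [ginvc _]]]] gK ginvK]] := homeo_inverse hg.
pose psi := ginv \o edge a b.
have psi_t0 : psi t0 = vtx p by rewrite /psi /= -E gK.
have psi_cont s : open_unit_int s -> {for s, continuous psi}.
  by move=> s01; apply: continuous_comp; [exact: edge_continuous|exact: ginvc].
have [e e0 eP] : exists2 e : R, 0 < e &
    forall s, t0 - e < s < t0 + e -> open_unit_int s /\ star p 1 (psi s).
  apply/nbhs_realP; apply: filterI.
    by apply: open_nbhs_nbhs; split => //; exact: open_open_unit_int.
  apply: (psi_cont _ t01); apply: open_nbhs_nbhs; split; last by left.
  by apply: open_star; rewrite ltr01 lexx.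
suff : degree_two adj p by move/no_degree_two.
apply: (@chart_degree_two p psi (t0 - e) t0 (t0 + e)).
- by rewrite ltrBlDr ltrDl.
- by rewrite ltrDl.
- by move=> s /eP [s01 _]; exact: psi_cont.
- move=> s s' /eP [s01 _] /eP [s01' _] /(can_inj ginvK) E'.
  by have [] := edge_interior_inj_from ab ab s01 s01' E'.
- move=> J oJ J_sub.
  have -> : psi @` J = g @^-1` (edge a b @` J).
    apply/seteqP; split=> [_ [s Js <-]|z [s Js E']]; first by exists s; rewrite //= ginvK.
    by exists s => //; rewrite /psi /= E' gK.
  apply: (continuousP g).1 gc _ _; apply: open_edge_image => // s Js.
  by have [] := eP s (J_sub s Js).
- exact: psi_t0.
- by move=> s /eP [].
Qed.

Lemma homeo_edge_cell g x y : homeo g -> adj x y ->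
  exists c d, forall u, 0 < u < 1 -> edge_cell c d (g (edge x y u)).
Proof.
move=> hg xy; have [_ [_ [_ [gc _]]]] := hg.
have [ginv [hginv gK _]] := homeo_inverse hg.
suff [[c d] cdP] : exists cd : V * V, forall u, 0 < u < 1 ->
    edge_cell cd.1 cd.2 ((g \o edge x y) u) by exists c, d.
apply: (interval_path_in_one_piece (O := fun cd : V * V => edge_cell cd.1 cd.2)) ltr01 _ _ _ _.
- move=> u u01; apply: continuous_comp; last exact: gc.
  by apply: edge_continuous => //; exact/in_open_unit_int.
- by move=> [c d]; exact: open_edge_cell.
- by move=> [c d] [c' d'] z; exact: eq_edge_cell.
move=> u /in_open_unit_int u01.
case: (realization_cover (g (edge x y u))) => [[q Eq]|[c [d [u' [cd u'01 E]]]]].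
  have [q' Eq'] := homeo_vertex q hginv.
  by move: Eq'; rewrite -Eq gK => /(edge_neq_vtx xy u01).
by exists (c, d); rewrite /= E; exact: edge_cell_edge.
Qed.

Lemma homeo_adj g x y x' y' : homeo g -> adj x y ->
  g (vtx x) = vtx x' -> g (vtx y) = vtx y' -> adj x' y'.
Proof.
move=> hg xy gx gy.
have [c [d cdP]] := homeo_edge_cell hg xy.
have cd : adj c d by have [u [] ] := cdP 2^-1 ltac:(apply/andP; split; lra).
have x'cd := homeo_vertex_endpoint hg xy gx cdP.
have y'cd : y' = c \/ y' = d.
  apply: (homeo_vertex_endpoint hg (adj_sym xy) gy) => u /andP [u0 u1].
  rewrite edge_flip; [|exact: adj_sym|by apply/in_unit_int; rewrite !ltW].
  by apply: cdP; apply/andP; split; lra.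
have x'y' : x' <> y'.
  move=> x'_y'; have x_y : x = y by apply/vtx_inj/(homeo_inj hg); rewrite gx gy x'_y'.
  by rewrite x_y in xy; exact: adj_irrefl xy.
by case: x'cd y'cd x'y' => -> [] -> neq //; exact: adj_sym.
Qed.

Lemma vertex_mapE g v : homeo g -> g (vtx v) = vtx (vertex_map g v).
Proof. by move=> hg; have [w gv] := homeo_vertex v hg; rewrite (vertex_map_eq gv). Qed.

Lemma graph_aut_vertex_map g : homeo g -> graph_aut adj (vertex_map g).
Proof.
move=> hg; have [g' [hg' gK g'K]] := homeo_inverse hg.
have vK h h' : homeo h -> cancel h h' -> cancel (vertex_map h) (vertex_map h').
  by move=> hh hK v; apply: vertex_map_eq; rewrite -vertex_mapE.
split; first by exists (vertex_map g'); exact: vK.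
move=> x y; split=> [|gxy]; first by move/(homeo_adj hg); apply; exact: vertex_mapE.
by apply: (homeo_adj hg' gxy); rewrite -vertex_mapE.
Qed.

End no_degree_two.
End realization.

Theorem proposition25 (Z : topologicalType) :
  hausdorff_space Z -> completely_regular Z -> ~ discrete_sp Z ->
  exists (X : topologicalType) (Phi : (X -> X) -> (Z -> Z)),
    hausdorff_space X /\ scattered X /\
    ~ locally_compact_sp X /\ ~ zero_dim X /\
    quotient_iso_map Phi /\
    (forall (V : Type) (adj : V -> V -> Prop) (vtx : V -> Z)
            (edge : V -> V -> Rdefinitions.R -> Z),
       realization adj vtx edge ->
       (forall v, ~ degree_two adj v) ->
       exists F : (X -> X) -> (V -> V),
         (forall h, homeo h -> forall v, Phi h (vtx v) = vtx (F h v)) /\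
         (forall h, homeo h -> graph_aut adj (F h)) /\
         (forall a, graph_aut adj a -> exists h, homeo h /\ F h = a) /\
         ptws_continuous F).
Proof.
move=> hZ crZ ndZ; have rZ := regular_of_completely_regular crZ.
have qiso := quotient_iso_fan_map rZ.
exists (fan Z), (@fan_map Z).
split; first exact: hausdorff_fan.
split; first exact: scattered_fan.
split; first exact: not_locally_compact_fan.
split; first exact: not_zero_dim_fan.
split; first exact: qiso.
move=> V adj vtx edge rz nd2.
have FE h : homeo h -> forall v, fan_map h (vtx v) = vtx (vertex_map vtx (fan_map h) v).
  by move=> hh v; apply: (vertex_mapE rz nd2); exact: homeo_fan_map.
exists (fun h => vertex_map vtx (fan_map h)); split => //.
split; first by move=> h hh; apply: (graph_aut_vertex_map rz nd2); exact: homeo_fan_map.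
split; last exact: ptws_continuous_fan_map (vtx_inj rz) FE.
move=> a aa; have [h [hh ha]] := qiso.2.2.1 _ (homeo_aut_extension rz aa).
by exists h; split => //; rewrite ha vertex_map_aut_extension.
Qed.
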